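(* Let $G$ be a locally finite quasi-transitive graph. Then $G$ has a periodic orientation if and only if there is a subgroup $\Gamma\subseteq\mathrm{Aut}(G)$ acting quasi-transitively on $V(G)$ such that no element of $\Gamma$ inverts an edge of $G$.
   Context: Locally finite: all degrees finite; quasi-transitive: finitely many $\mathrm{Aut}(G)$-orbits on $V(G)$; a group acts quasi-transitively if it has finitely many orbits on $V(G)$. An automorphism $g$ inverts an edge $uv$ if $g(u)=v$ and $g(v)=u$. An orientation of $G$ is periodic if the subgroup of automorphisms mapping every edge to an edge with the same orientation has finitely many orbits on $V(G)$. *)

From Stdlib Require Import List.

Section GraphDefs.
Variable V : Type.
Variable adj : V -> V -> Prop.

Definition symmetric_graph : Prop := forall x y, adj x y -> adj y x.
Definition loopless : Prop := forall x, ~ adj x x.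

Definition locally_finite : Prop :=
  forall x, exists l : list V, forall y, adj x y -> In y l.

Definition is_aut (g : V -> V) : Prop :=
  (exists h : V -> V, (forall x, h (g x) = x) /\ (forall y, g (h y) = y)) /\
  (forall x y, adj x y <-> adj (g x) (g y)).

Definition finitely_many_orbits (S : (V -> V) -> Prop) : Prop :=
  exists l : list V, forall x, exists r, In r l /\ exists g, S g /\ g r = x.

Definition quasi_transitive : Prop := finitely_many_orbits is_aut.

Definition is_subgroup_Aut (S : (V -> V) -> Prop) : Prop :=
  (forall g, S g -> is_aut g) /\
  S (fun x => x) /\
  (forall g h, S g -> S h -> S (fun x => g (h x))) /\
  (forall g, S g -> exists h, S h /\ forall x, h (g x) = x /\ g (h x) = x).

Definition inverts_edge (g : V -> V) (u v : V) : Prop :=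
  adj u v /\ g u = v /\ g v = u.

Definition inverts_some_edge (g : V -> V) : Prop :=
  exists u v, inverts_edge g u v.

(* an orientation: o u v means the edge uv is oriented from u to v *)
Definition is_orientation (o : V -> V -> Prop) : Prop :=
  (forall u v, o u v -> adj u v) /\
  (forall u v, adj u v -> o u v \/ o v u) /\
  (forall u v, o u v -> ~ o v u).

Definition preserves_orientation (o : V -> V -> Prop) (g : V -> V) : Prop :=
  is_aut g /\ forall u v, o u v -> o (g u) (g v).

Definition periodic_orientation (o : V -> V -> Prop) : Prop :=
  is_orientation o /\ finitely_many_orbits (preserves_orientation o).

End GraphDefs.

(* The automorphisms preserving an orientation form a group, and none of them
   inverts an edge uv, since it would map the oriented edge u -> v to v -> u.
   Conversely, let Γ be a group of automorphisms inverting no edge.  Choose in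
   the Γ-orbit of every unordered pair {x, y} a representative ordered pair
   (a, b) and orient xy from x to y iff some element of Γ maps (a, b) to
   (x, y).  This is an orientation: if elements g, g' of Γ mapped (a, b) to
   (x, y) and to (y, x), then g' g^-1 would invert xy.  Γ preserves it by
   construction, so the group of orientation-preserving automorphisms contains
   Γ and has finitely many orbits whenever Γ does. *)

From Stdlib Require Import List.
From Stdlib Require Import ClassicalEpsilon FunctionalExtensionality PropExtensionality ProofIrrelevance.

Section Automorphisms.
Variable V : Type.
Variable adj : V -> V -> Prop.

Lemma is_aut_id : is_aut V adj (fun x => x).
Proof.
  split; [exists (fun x => x); auto | tauto].
Qed.

Lemma is_aut_comp g h :
  is_aut V adj g -> is_aut V adj h -> is_aut V adj (fun x => g (h x)).
Proof.
  intros [[gi [gig ggi]] g_adj] [[hi [hih hhi]] h_adj]. split.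
  - exists (fun x => hi (gi x)). split; intros x.
    + rewrite gig; apply hih.
    + rewrite hhi; apply ggi.
  - intros x y. rewrite h_adj, g_adj. tauto.
Qed.

Lemma is_aut_inverse g h :
  is_aut V adj g -> (forall x, h (g x) = x) -> (forall y, g (h y) = y) ->
  is_aut V adj h.
Proof.
  intros [_ g_adj] hg gh. split.
  - exists g; split; assumption.
  - intros x y. rewrite (g_adj (h x) (h y)), !gh. tauto.
Qed.

Lemma finitely_many_orbits_sub (S T : (V -> V) -> Prop) :
  (forall g, S g -> T g) ->
  finitely_many_orbits V S -> finitely_many_orbits V T.
Proof.
  intros ST [l Hl]. exists l. intros x.
  destruct (Hl x) as [r [Hr [g [Sg gr]]]].
  exists r. split; [assumption |]. exists g. auto.
Qed.

End Automorphisms.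

Section OrientationPreserving.
Variable V : Type.
Variable adj : V -> V -> Prop.
Variable o : V -> V -> Prop.
Hypothesis Ho : is_orientation V adj o.

Lemma preserves_orientation_inverse g h :
  preserves_orientation V adj o g ->
  (forall x, h (g x) = x) -> (forall y, g (h y) = y) ->
  preserves_orientation V adj o h.
Proof.
  destruct Ho as [o_adj [o_total o_asym]].
  intros [Ag g_o] hg gh.
  assert (Ah : is_aut V adj h) by exact (is_aut_inverse V adj g h Ag hg gh).
  split; [exact Ah |]. intros u v Huv.
  assert (Hadj : adj (h u) (h v)) by (apply (proj2 Ah u v), o_adj, Huv).
  destruct (o_total _ _ Hadj) as [H | H]; [exact H |].
  apply g_o in H. rewrite !gh in H. contradiction (o_asym _ _ Huv H).
Qed.

Lemma preserves_orientation_subgroup :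
  is_subgroup_Aut V adj (preserves_orientation V adj o).
Proof.
  split; [| split; [| split]].
  - intros g [Ag _]. exact Ag.
  - split; [apply is_aut_id | auto].
  - intros g h [Ag g_o] [Ah h_o].
    split; [apply is_aut_comp; assumption | auto].
  - intros g Pg. destruct (proj1 (proj1 Pg)) as [h [hg gh]].
    exists h. split; [exact (preserves_orientation_inverse g h Pg hg gh) | auto].
Qed.

Lemma preserves_orientation_no_inversion g :
  preserves_orientation V adj o g -> ~ inverts_some_edge V adj g.
Proof.
  destruct Ho as [_ [o_total o_asym]].
  intros [_ g_o] [u [v [Huv [gu gv]]]].
  destruct (o_total _ _ Huv) as [H | H];
    pose proof (g_o _ _ H) as H'; rewrite gu, gv in H'; exact (o_asym _ _ H H').
Qed.

End OrientationPreserving.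

Section OrbitOrientation.
Variable V : Type.
Variable adj : V -> V -> Prop.
Variable S : (V -> V) -> Prop.
Hypothesis HS : is_subgroup_Aut V adj S.

Definition pair_orbit (x y : V) (p : V * V) : Prop :=
  exists g, S g /\
    ((fst p = g x /\ snd p = g y) \/ (fst p = g y /\ snd p = g x)).

Lemma pair_orbit_comm x y : pair_orbit x y = pair_orbit y x.
Proof.
  apply functional_extensionality; intros p; apply propositional_extensionality.
  split; intros [g [Sg H]]; exists g; tauto.
Qed.

Lemma pair_orbit_image h x y : S h -> pair_orbit (h x) (h y) = pair_orbit x y.
Proof.
  destruct HS as [_ [_ [S_comp S_inv]]].
  intros Sh. destruct (S_inv h Sh) as [hi [Shi hih]].
  apply functional_extensionality; intros p; apply propositional_extensionality.
  split; intros [g [Sg H]].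
  - exists (fun z => g (h z)). split; [apply S_comp |]; assumption.
  - exists (fun z => g (hi z)). split; [apply S_comp; assumption |].
    simpl. rewrite !(proj1 (hih _)). exact H.
Qed.

Definition orbit_rep (x y : V) : V * V :=
  epsilon (inhabits (x, y)) (pair_orbit x y).

Lemma orbit_rep_spec x y : pair_orbit x y (orbit_rep x y).
Proof.
  destruct HS as [_ [S_id _]].
  unfold orbit_rep. apply epsilon_spec. exists (x, y), (fun z => z). simpl. auto.
Qed.

(* The inhabitant passed to [epsilon] depends on (x, y); proof irrelevance
   makes the choice depend on the orbit only. *)
Lemma orbit_rep_eq x y x' y' :
  pair_orbit x y = pair_orbit x' y' -> orbit_rep x y = orbit_rep x' y'.
Proof.
  intros E. unfold orbit_rep. rewrite E. f_equal. apply proof_irrelevance.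
Qed.

Lemma orbit_rep_comm x y : orbit_rep y x = orbit_rep x y.
Proof. apply orbit_rep_eq, pair_orbit_comm. Qed.

Definition orbit_orientation (x y : V) : Prop :=
  adj x y /\
  exists g, S g /\ g (fst (orbit_rep x y)) = x /\ g (snd (orbit_rep x y)) = y.

Lemma orbit_orientation_is_orientation :
  symmetric_graph V adj ->
  (forall g, S g -> ~ inverts_some_edge V adj g) ->
  is_orientation V adj orbit_orientation.
Proof.
  destruct HS as [_ [_ [S_comp S_inv]]].
  intros Hsym Hni. split; [| split].
  - intros u v [Huv _]. exact Huv.
  - intros u v Huv.
    destruct (orbit_rep_spec u v) as [g [Sg Hg]].
    destruct (S_inv g Sg) as [gi [Sgi gig]].
    destruct Hg as [[H1 H2] | [H1 H2]].
    + left. split; [exact Huv |]. exists gi.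
      rewrite H1, H2. repeat split; [exact Sgi | apply gig | apply gig].
    + right. split; [apply Hsym, Huv |]. exists gi.
      rewrite orbit_rep_comm, H1, H2.
      repeat split; [exact Sgi | apply gig | apply gig].
  - intros u v [Huv [g [Sg [gu gv]]]] [_ [g' [Sg' [g'v g'u]]]].
    rewrite orbit_rep_comm in g'v, g'u.
    destruct (S_inv g Sg) as [gi [Sgi gig]].
    apply (Hni (fun z => g' (gi z)) (S_comp _ _ Sg' Sgi)).
    exists u, v. split; [exact Huv |].
    assert (giu : gi u = fst (orbit_rep u v)) by (rewrite <- gu at 1; apply gig).
    assert (giv : gi v = snd (orbit_rep u v)) by (rewrite <- gv at 1; apply gig).
    rewrite giu, giv. auto.
Qed.

Lemma orbit_orientation_preserved g :
  S g -> preserves_orientation V adj orbit_orientation g.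
Proof.
  destruct HS as [S_aut [_ [S_comp _]]].
  intros Sg. split; [apply S_aut, Sg |].
  intros u v [Huv [h [Sh [hu hv]]]]. split.
  - apply (proj2 (S_aut g Sg) u v), Huv.
  - exists (fun z => g (h z)). split; [apply S_comp; assumption |].
    rewrite (orbit_rep_eq _ _ u v (pair_orbit_image g u v Sg)), hu, hv. auto.
Qed.

End OrbitOrientation.

Theorem lemma2p10 (V : Type) (adj : V -> V -> Prop)
  (Hsym : symmetric_graph V adj) (Hloop : loopless V adj)
  (Hlf : locally_finite V adj) (Hqt : quasi_transitive V adj) :
  (exists o : V -> V -> Prop, periodic_orientation V adj o) <->
  (exists S : (V -> V) -> Prop,
     is_subgroup_Aut V adj S /\ finitely_many_orbits V S /\
     forall g, S g -> ~ inverts_some_edge V adj g).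
Proof.
  split.
  - intros [o [Ho Hfin]].
    exists (preserves_orientation V adj o). split; [| split].
    + exact (preserves_orientation_subgroup V adj o Ho).
    + exact Hfin.
    + exact (preserves_orientation_no_inversion V adj o Ho).
  - intros [S [HS [Hfin Hni]]].
    exists (orbit_orientation V adj S). split.
    + exact (orbit_orientation_is_orientation V adj S HS Hsym Hni).
    + exact (finitely_many_orbits_sub V S _
               (orbit_orientation_preserved V adj S HS) Hfin).
Qed.
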